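(* Let $r,k,s$ be integers with $k+r\neq 0$ and $k+s\neq 0$, and let $n\ge 0$ be an integer. Then \[ 2\sum_{j=0}^{n}(-1)^{(k+s)j}L_{r-s}^{j}L_{2k+r+s}^{n-j}=\sum_{j=0}^{n}\left(\frac{L_{k+r}L_{k+s}}{2}\right)^j\left(L_{2k+r+s}^{n-j}+(-1)^{(k+s)(n-j)}L_{r-s}^{n-j}\right)=2\,\frac{L_{2k+r+s}^{n+1}-(-1)^{(k+s)(n+1)}L_{r-s}^{n+1}}{5F_{k+r}F_{k+s}}. \]
   Context: $F_n$ and $L_n$ denote the Fibonacci and Lucas numbers, defined for all integers $n$ by $F_0=0,F_1=1$, $L_0=2,L_1=1$ and $x_n=x_{n-1}+x_{n-2}$; equivalently $F_n=(\alpha^n-\beta^n)/(\alpha-\beta)$, $L_n=\alpha^n+\beta^n$ with $\alpha=(1+\sqrt5)/2$, $\beta=(1-\sqrt5)/2$. In particular $F_{-n}=(-1)^{n-1}F_n$ and $L_{-n}=(-1)^nL_n$. *)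

From mathcomp Require Import all_boot all_order all_algebra.
Set Implicit Arguments. Unset Strict Implicit. Unset Printing Implicit Defensive.
Import Order.TTheory GRing.Theory Num.Theory.
Local Open Scope ring_scope.

Fixpoint fibn (n : nat) : int :=
  match n with
  | 0%N => 0
  | 1%N as m => 1
  | (m.+1 as p).+1 => fibn p + fibn m
  end.

Fixpoint lucn (n : nat) : int :=
  match n with
  | 0%N => 2
  | 1%N => 1
  | (m.+1 as p).+1 => lucn p + lucn m
  end.

(* F_{-n} = (-1)^{n-1} F_n, L_{-n} = (-1)^n L_n *)
Definition Fib (z : int) : int :=
  match z with
  | Posz n => fibn n
  | Negz m => (-1) ^+ m * fibn m.+1     (* z = -(m+1) *)
  end.

Definition Luc (z : int) : int :=
  match z with
  | Posz n => lucn n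
  | Negz m => (-1) ^+ m.+1 * lucn m.+1
  end.

From mathcomp Require Import all_boot all_order all_algebra.
From mathcomp Require Import ring zify.
Import Order.TTheory GRing.Theory Num.Theory.
Set Implicit Arguments. Unset Strict Implicit. Unset Printing Implicit Defensive.
Local Open Scope ring_scope.

(* Put a = L_(2k+r+s), b = (-1)^(k+s) L_(r-s) and c = L_(k+r) L_(k+s) / 2.  The
   product formulas L_m L_n = L_(m+n) + (-1)^n L_(m-n) and
   5 F_m F_n = L_(m+n) - (-1)^n L_(m-n) give 2c = a + b and a - b = 5 F_(k+r) F_(k+s),
   which is nonzero.  The three expressions are 2 sum_j b^j a^(n-j),
   sum_j c^j (a^(n-j) + b^(n-j)) and 2 (a^(n+1) - b^(n+1)) / (a - b); multiplied by
   a - b each becomes 2 (a^(n+1) - b^(n+1)), the middle one by induction on n using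
   2c = a + b.  Both sides of each product formula satisfy the Fibonacci recurrence
   in m, so it suffices to compare them at m = 0 and m = 1. *)


Section FibonacciRecurrence.

Variable R : comPzRingType.

Definition fib_rec (f : int -> R) := forall z, f (z + 2) = f (z + 1) + f z.

Lemma fib_recD f g : fib_rec f -> fib_rec g -> fib_rec (fun z => f z + g z).
Proof. by move=> hf hg z /=; rewrite hf hg; ring. Qed.

Lemma fib_recN f : fib_rec f -> fib_rec (fun z => - f z).
Proof. by move=> hf z /=; rewrite hf opprD. Qed.

Lemma fib_recMl c f : fib_rec f -> fib_rec (fun z => c * f z).
Proof. by move=> hf z /=; rewrite hf mulrDr. Qed.

Lemma fib_recMr c f : fib_rec f -> fib_rec (fun z => f z * c).
Proof. by move=> hf z /=; rewrite hf mulrDl. Qed.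

Lemma fib_rec_shift d f : fib_rec f -> fib_rec (fun z => f (z + d)).
Proof. by move=> hf z /=; rewrite (addrAC z 2) (addrAC z 1) hf. Qed.

Lemma fib_rec_eq0 f : fib_rec f -> f 0 = 0 -> f 1 = 0 -> forall z, f z = 0.
Proof.
move=> hf f0 f1.
have up (n : nat) : f n = 0 /\ f n.+1 = 0.
  elim: n => [|n [fn fn1]]; first by split.
  split; first exact: fn1.
  have := hf n; rewrite -!PoszD !addn1 addn2 => ->.
  by rewrite fn fn1 addr0.
have down (n : nat) : f (- n%:Z) = 0 /\ f (1 - n%:Z) = 0.
  elim: n => [|n [fn fn1]]; first by split.
  have := hf (- n.+1%:Z).
  rewrite (_ : - n.+1%:Z + 2 = 1 - n%:Z); last by lia.
  rewrite (_ : - n.+1%:Z + 1 = - n%:Z); last by lia.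
  rewrite fn fn1 add0r => /esym hn; split; first exact: hn.
  by rewrite (_ : 1 - n.+1%:Z = - n%:Z); last by lia.
by case=> [n|m]; [case: (up n) | rewrite NegzE; case: (down m.+1)].
Qed.

Lemma fib_rec_uniq f g : fib_rec f -> fib_rec g -> f 0 = g 0 -> f 1 = g 1 ->
  forall z, f z = g z.
Proof.
move=> hf hg e0 e1 z; apply/eqP; rewrite -subr_eq0; apply/eqP.
by apply: (fib_rec_eq0 (fib_recD hf (fib_recN hg))); rewrite /= ?e0 ?e1 subrr.
Qed.

Lemma fib_rec_from_nat (f : int -> R) (c : R) :
  (forall n : nat, f n.+2 = f n.+1 + f n) ->
  (forall n : nat, f (- n%:Z) = c * (-1) ^+ n * f n) ->
  f 1 = f 0 + f (-1) -> fib_rec f.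
Proof.
move=> hnat hneg hm1 [n|[|m]].
- rewrite (_ : n%:Z + 2 = n.+2); last by lia.
  by rewrite (_ : n%:Z + 1 = n.+1) ?hnat; last by lia.
- by rewrite (_ : -1 + 2 = 1) // (_ : -1 + 1 = 0) // hm1 addrC.
- rewrite NegzE (_ : - m.+2%:Z + 2 = - m%:Z); last by lia.
  rewrite (_ : - m.+2%:Z + 1 = - m.+1%:Z); last by lia.
  by rewrite !hneg hnat !exprS; ring.
Qed.

End FibonacciRecurrence.

Lemma sign_sqr (z : int) : (-1 : int) ^ z * (-1) ^ z = 1.
Proof. by rewrite expN1r -exprMn mulrNN mulr1 expr1n. Qed.

Lemma Luc_negn (n : nat) : Luc (- n%:Z) = (-1) ^+ n * Luc n.
Proof. by case: n => [|m]; last rewrite -NegzE. Qed.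

Lemma Fib_negn (n : nat) : Fib (- n%:Z) = - (-1) ^+ n * Fib n.
Proof. by case: n => [|m]; rewrite ?mulr0 // -NegzE /= exprS mulN1r opprK. Qed.

Lemma fib_rec_Luc : fib_rec Luc.
Proof. by apply: (fib_rec_from_nat (c := 1)) => // n; rewrite mul1r Luc_negn. Qed.

Lemma fib_rec_Fib : fib_rec Fib.
Proof. by apply: (fib_rec_from_nat (c := -1)) => // n; rewrite mulN1r Fib_negn. Qed.

Lemma Luc_neg z : Luc (- z) = (-1) ^ z * Luc z.
Proof.
case: z => [n|m]; first exact: Luc_negn.
by rewrite NegzE opprK Luc_negn mulrA -exprnN mulVr ?unitrX ?unitrN1 ?mul1r.
Qed.

Lemma sign_sub1 (z : int) : (-1 : int) ^ (z - 1) = - (-1) ^ z.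
Proof. by rewrite exprzDr ?unitrN1 // exprN1 invrN1 mulrN1. Qed.

Lemma Luc_mul m n : Luc m * Luc n = Luc (m + n) + (-1) ^ n * Luc (m - n).
Proof.
move: m; apply: fib_rec_uniq.
- exact: fib_recMr fib_rec_Luc.
- exact: fib_recD (fib_rec_shift _ fib_rec_Luc) (fib_recMl _ (fib_rec_shift _ fib_rec_Luc)).
- by rewrite add0r sub0r Luc_neg mulrA sign_sqr mul1r [Luc 0]/= mulr_natl mulr2n.
- have := fib_rec_Luc (n - 1).
  rewrite (_ : n - 1 + 2 = 1 + n); last by lia.
  rewrite (_ : n - 1 + 1 = n); last by lia.
  move=> ->; rewrite [Luc 1]/= mul1r -[1 - n]opprB Luc_neg sign_sub1 mulrA mulrN sign_sqr.
  by rewrite mulN1r addrK.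
Qed.

Lemma Fib_mul5 n : 5 * Fib n = Luc (n + 1) + Luc (n - 1).
Proof.
move: n; apply: fib_rec_uniq.
- exact: fib_recMl fib_rec_Fib.
- exact: fib_recD (fib_rec_shift _ fib_rec_Luc) (fib_rec_shift _ fib_rec_Luc).
- by [].
- by [].
Qed.

Lemma Fib_mul m n : 5 * Fib m * Fib n = Luc (m + n) - (-1) ^ n * Luc (m - n).
Proof.
move: m; apply: fib_rec_uniq.
- exact: fib_recMr (fib_recMl _ fib_rec_Fib).
- exact: fib_recD (fib_rec_shift _ fib_rec_Luc)
                  (fib_recN (fib_recMl _ (fib_rec_shift _ fib_rec_Luc))).
- by rewrite add0r sub0r Luc_neg mulrA sign_sqr mul1r mulr0 mul0r subrr.
- rewrite mulr1 Fib_mul5 -[1 - n]opprB Luc_neg sign_sub1 mulrA mulrN sign_sqr.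
  by rewrite mulN1r opprK (addrC 1).
Qed.

Lemma fibn_gt0 n : 0 < fibn n.+1.
Proof.
suff : 0 < fibn n.+1 /\ 0 < fibn n.+2 by case.
elim: n => [|n [h1 h2]] //; split=> //.
by rewrite [fibn n.+3]/= addr_gt0.
Qed.

Lemma Fib_neq0 z : z != 0 -> Fib z != 0.
Proof.
case: z => [[|n]|m] //= _; first by rewrite gt_eqF ?fibn_gt0.
by rewrite mulf_neq0 ?signr_eq0 // gt_eqF ?fibn_gt0.
Qed.

Lemma mulr_subr_sumXX (R : comPzRingType) (a b : R) n :
  (a - b) * \sum_(0 <= j < n.+1) b ^+ j * a ^+ (n - j) = a ^+ n.+1 - b ^+ n.+1.
Proof. by rewrite subrXX big_mkord; congr (_ * _); apply: eq_bigr => i _; rewrite mulrC. Qed.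

Lemma mulr_subr_sum_mean (R : comPzRingType) (a b c : R) n : 2 * c = a + b ->
  (a - b) * \sum_(0 <= j < n.+1) c ^+ j * (a ^+ (n - j) + b ^+ (n - j))
  = 2 * (a ^+ n.+1 - b ^+ n.+1).
Proof.
move=> hc; elim: n => [|n IHn]; first by rewrite big_nat1 !expr0 mul1r; ring.
rewrite big_nat_recl // subn0 expr0 mul1r.
under eq_bigr => j _ do rewrite subSS exprS -mulrA.
rewrite -mulr_sumr mulrDr mulrCA IHn mulrA [c * 2]mulrC hc !(exprS _ n.+1); ring.
Qed.

Lemma mean_power_sums (F : fieldType) (a b c : F) n : a != b -> 2 * c = a + b ->
  (2 * \sum_(0 <= j < n.+1) b ^+ j * a ^+ (n - j)
   = \sum_(0 <= j < n.+1) c ^+ j * (a ^+ (n - j) + b ^+ (n - j)))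
  /\ (\sum_(0 <= j < n.+1) c ^+ j * (a ^+ (n - j) + b ^+ (n - j))
   = 2 * (a ^+ n.+1 - b ^+ n.+1) / (a - b)).
Proof.
rewrite -subr_eq0 => ab0 hc; split; apply: (mulfI ab0).
- by rewrite mulrCA mulr_subr_sumXX (mulr_subr_sum_mean _ hc).
- by rewrite (mulr_subr_sum_mean _ hc) [RHS]mulrC divfK.
Qed.

Theorem theorem8 (r k s : int) (n : nat) (hkr : k + r != 0) (hks : k + s != 0) :
  let L := fun z : int => (Luc z)%:~R : rat in
  let F := fun z : int => (Fib z)%:~R : rat in
  let sgn := fun e : int => (-1 : rat) ^ e in
  (2 * \sum_(0 <= j < n.+1) sgn ((k + s) * j%:Z) * L (r - s) ^+ j * L (2 * k + r + s) ^+ (n - j)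
   = \sum_(0 <= j < n.+1) (L (k + r) * L (k + s) / 2) ^+ j
        * (L (2 * k + r + s) ^+ (n - j) + sgn ((k + s) * (n - j)%N%:Z) * L (r - s) ^+ (n - j)))
  /\
  (\sum_(0 <= j < n.+1) (L (k + r) * L (k + s) / 2) ^+ j
        * (L (2 * k + r + s) ^+ (n - j) + sgn ((k + s) * (n - j)%N%:Z) * L (r - s) ^+ (n - j))
   = 2 * (L (2 * k + r + s) ^+ n.+1 - sgn ((k + s) * n.+1%:Z) * L (r - s) ^+ n.+1)
       / (5 * F (k + r) * F (k + s))).
Proof.
move=> L F sgn.
have sgnM (z : int) (j : nat) : sgn (z * j%:Z) = sgn z ^+ j by rewrite /sgn -exprz_exp -exprnP.
have sgn_int (z : int) : ((-1) ^ z)%:~R = sgn z by rewrite rmorphXz ?unitrN1 // rmorphN1.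
have -> : 2 * k + r + s = (k + r) + (k + s) by ring.
have -> : r - s = (k + r) - (k + s) by ring.
set a := L ((k + r) + (k + s)); pose b := sgn (k + s) * L ((k + r) - (k + s)).
have hc : 2 * (L (k + r) * L (k + s) / 2) = a + b.
  by rewrite mulrC divfK // /L -intrM Luc_mul rmorphD rmorphM /= sgn_int.
have hab : a - b = 5 * F (k + r) * F (k + s).
  have := congr1 (intr : int -> rat) (Fib_mul (k + r) (k + s)).
  by rewrite !rmorphM rmorphB rmorphM /= sgn_int => ->.
under eq_bigr => j _ do rewrite sgnM -exprMn -/b.
under [in RHS]eq_bigr => j _ do rewrite sgnM -exprMn -/b.
under [in X in _ /\ X]eq_bigr => j _ do rewrite sgnM -exprMn -/b.
rewrite sgnM -exprMn -/b -hab.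
apply: mean_power_sums hc.
by rewrite -subr_eq0 hab !mulf_neq0 ?intr_eq0 ?Fib_neq0.
Qed.
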